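(* Let $n\ge 1$ be a number of qubits, let $\rho_0$ be an $n$-qubit input state, let $O$ be a Hermitian observable, and let $U(\theta)=\prod_{j=1}^{m}\exp(-i\theta_j H_j)$ be a parameterized unitary with Hermitian generators $H_j$ and parameters $\theta\in\mathbb{R}^m$. Define the cost $C_{\mathrm{uni}}(\theta)=\operatorname{Tr}[O\,U(\theta)\rho_0U(\theta)^\dagger]$, its infimum $C^*_{\mathrm{uni}}=\inf_\theta C_{\mathrm{uni}}(\theta)$, and consider gradient descent $\theta_{t+1}=\theta_t-\eta\nabla C_{\mathrm{uni}}(\theta_t)$ started from a random initialization $\theta_0$, with optimality gaps $\Delta_t=C_{\mathrm{uni}}(\theta_t)-C^*_{\mathrm{uni}}$. Assume: (i) (smoothness) $\|\nabla C_{\mathrm{uni}}(\theta)-\nabla C_{\mathrm{uni}}(\phi)\|_2\le\beta\|\theta-\phi\|_2$ for all $\theta,\phi$, equivalently $\|\nabla^2 C_{\mathrm{uni}}(\theta)\|_2\le\beta$ for all $\theta$, and $0<\eta\le 1/\beta$; (ii) (trajectory-uniform flatness) there are constants $B>0$ and $b>1$ such that $\mathbb{E}\big[\|\nabla C_{\mathrm{uni}}(\theta_t)\|_2^2\big]\le G(n):=m\,B\,b^{-n}$ for all $t\ge 0$ until the expected gap reaches a target $\varepsilon$ (i.e. for every $t$ such that $\mathbb{E}[\Delta_s]>\varepsilon$ for all $s\le t$). Suppose $\mathbb{E}[\Delta_0]\ge\delta_0>0$. If $\mathbb{E}[\Delta_T]\le\varepsilon<\delta_0$, then $$T\ \ge\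 \frac{2(\delta_0-\varepsilon)}{3\eta\,G(n)}=\Omega\!\left(\frac{b^n}{\eta\, m}\right).$$
   Context: Expectations are taken over the random initialization $\theta_0$ (gradient descent is deterministic thereafter). $\|\cdot\|_2$ denotes the Euclidean norm for vectors and the spectral norm for the Hessian. The $\Omega(\cdot)$ is asymptotic in the number of qubits $n$, with $\delta_0,\varepsilon,B,b$ fixed. *)

From mathcomp Require Import all_boot all_order all_algebra.
From mathcomp Require Import all_classical all_reals all_analysis.
From mathcomp Require Import complex.
Set Implicit Arguments. Unset Strict Implicit. Unset Printing Implicit Defensive.
Import Order.TTheory GRing.Theory Num.Theory numFieldTopology.Exports numFieldNormedType.Exports.
Local Open Scope ring_scope.
Local Open Scope complex_scope.

Section QDefs.
Variable R : realType.

Definition adjmx {p q : nat} (A : 'M[R[i]]_(p, q)) : 'M[R[i]]_(q, p) :=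
  (map_mx Num.conj A)^T.

Definition is_hermitian {N : nat} (A : 'M[R[i]]_N) : Prop := adjmx A = A.

(* positive semidefinite (order of R[i]: 0 <= z iff z is real and >= 0) *)
Definition psd {N : nat} (A : 'M[R[i]]_N) : Prop :=
  forall v : 'cV[R[i]]_N, 0 <= (adjmx v *m A *m v) 0 0.

Definition density {N : nat} (rho : 'M[R[i]]_N) : Prop :=
  [/\ is_hermitian rho, psd rho & \tr rho = 1].

(* matrix powers (N is not syntactically a successor, so we use mulmx) *)
Definition mxpow {N : nat} (A : 'M[R[i]]_N) (k : nat) : 'M[R[i]]_N :=
  iter k (mulmx A) 1%:M.

Definition expm_psum {N : nat} (A : 'M[R[i]]_N) (K : nat) : 'M[R[i]]_N :=
  \sum_(k < K) ((k`!%:R : R[i])^-1 *: mxpow A k).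

(* matrix exponential, entrywise limit of the (always convergent) series *)
Definition expm {N : nat} (A : 'M[R[i]]_N) : 'M[R[i]]_N :=
  \matrix_(i, j)
    ((limn (fun K => complex.Re (expm_psum A K i j)))
       +i* (limn (fun K => complex.Im (expm_psum A K i j)))).

Definition Uparam {N m : nat} (H : 'I_m -> 'M[R[i]]_N) (theta : 'rV[R]_m)
  : 'M[R[i]]_N :=
  \big[mulmx/1%:M]_(j < m) expm ((- 'i * (theta 0 j)%:C) *: H j).

Definition Cuni {N m : nat} (O rho0 : 'M[R[i]]_N) (H : 'I_m -> 'M[R[i]]_N)
  (theta : 'rV[R]_m) : R :=
  complex.Re (\tr (O *m Uparam H theta *m rho0 *m adjmx (Uparam H theta))).

Definition Cstar {N m : nat} (O rho0 : 'M[R[i]]_N) (H : 'I_m -> 'M[R[i]]_N)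
  : R := inf (range (Cuni O rho0 H)).

Definition grad {m : nat} (f : 'rV[R]_m -> R) (theta : 'rV[R]_m) : 'rV[R]_m :=
  \row_j ('D_(delta_mx 0 j) f theta).

Definition norm2 {m : nat} (v : 'rV[R]_m) : R :=
  Num.sqrt (\sum_(j < m) v 0 j ^+ 2).

Definition gd_iter {m : nat} (f : 'rV[R]_m -> R) (eta : R) (t : nat)
  (theta0 : 'rV[R]_m) : 'rV[R]_m :=
  iter t (fun th => th - eta *: grad f th) theta0.

Definition Expect {d} {Omega : measurableType d} (P : probability Omega R)
  (X : Omega -> R) : \bar R := (\int[P]_w (X w)%:E)%E.

End QDefs.

From mathcomp Require Import all_boot all_order all_algebra.
From mathcomp Require Import all_classical all_reals all_analysis.
From mathcomp Require Import complex.
From mathcomp Require Import ring lra.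
Import Order.TTheory GRing.Theory Num.Theory numFieldTopology.Exports numFieldNormedType.Exports.
Set Implicit Arguments. Unset Strict Implicit. Unset Printing Implicit Defensive.
Local Open Scope ring_scope.

(** By beta-smoothness, [f (th + v) >= f th + <v, grad f th> - beta/2 |v|^2];
   for the gradient step [v = - eta grad f th] with [eta <= 1/beta] this says
   that one step lowers the cost by at most [3/2 eta |grad f th|^2].  Taking
   expectations, the expected gap decreases by at most [3/2 eta G] per step as
   long as it stays above [eps], so going from [delta0] down to [eps] takes at
   least [(delta0 - eps) / (3/2 eta G)] steps. *)

Section Smoothness.
Variables (R : realType) (m : nat).
Implicit Types (f : 'rV[R]_m -> R) (x u v w : 'rV[R]_m).

Definition dotp u v : R := \sum_(j < m) u 0 j * v 0 j.

Lemma dotpZl a u w : dotp (a *: u) w = a * dotp u w.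
Proof. by rewrite /dotp mulr_sumr; apply: eq_bigr => j _; rewrite mxE mulrA. Qed.

Lemma dotpZr a u w : dotp u (a *: w) = a * dotp u w.
Proof. by rewrite /dotp mulr_sumr; apply: eq_bigr => j _; rewrite mxE mulrCA. Qed.

Lemma dotpNl u w : dotp (- u) w = - dotp u w.
Proof. by rewrite /dotp -sumrN; apply: eq_bigr => j _; rewrite mxE mulNr. Qed.

Lemma dotpNr u w : dotp u (- w) = - dotp u w.
Proof. by rewrite /dotp -sumrN; apply: eq_bigr => j _; rewrite mxE mulrN. Qed.

Lemma dotpBr u v w : dotp u (v - w) = dotp u v - dotp u w.
Proof. by rewrite /dotp -sumrB; apply: eq_bigr => j _; rewrite !mxE mulrBr. Qed.

Lemma dotp_ge0 u : 0 <= dotp u u.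
Proof. by apply: sumr_ge0 => j _; rewrite -expr2 sqr_ge0. Qed.

Lemma norm2_sqr u : norm2 u ^+ 2 = dotp u u.
Proof.
rewrite /norm2 sqr_sqrtr; last by apply: sumr_ge0 => j _; rewrite sqr_ge0.
by apply: eq_bigr => j _; rewrite expr2.
Qed.

(* The Cauchy-Schwarz consequence we need, from [0 <= |lam u + w|^2]. *)
Lemma dotp_lbound lam u w :
  0 < lam -> dotp w w <= lam ^+ 2 * dotp u u -> - (lam * dotp u u) <= dotp u w.
Proof.
move=> lam_gt0 w_small.
have sqr_sum : 0 <= 2 * lam * dotp u w + lam ^+ 2 * dotp u u + dotp w w.
  suff -> : 2 * lam * dotp u w + lam ^+ 2 * dotp u u + dotp w w =
            \sum_(j < m) (lam * u 0 j + w 0 j) ^+ 2.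
    by apply: sumr_ge0 => j _; rewrite sqr_ge0.
  rewrite /dotp !mulr_sumr -!big_split /=; apply: eq_bigr => j _; ring.
have uu_ge0 := dotp_ge0 u.
nra.
Qed.

Lemma differential_dotp f x v :
  differentiable f x -> 'd f x v = dotp v (grad f x).
Proof.
move=> df; rewrite {1}(row_sum_delta v) linear_sum; apply: eq_bigr => j _.
by rewrite linearZ /= /grad mxE deriveE.
Qed.

Lemma is_derive_line f x v s : differentiable f (s *: v + x) ->
  is_derive s 1 (fun s => f (s *: v + x)) ('d f (s *: v + x) v).
Proof.
move=> df.
have quotientE : (fun h : R =>
    h^-1 *: (((fun s => f (s *: v + x)) \o shift s) (h *: 1) - f (s *: v + x)))
  = (fun h => h^-1 *: ((f \o shift (s *: v + x)) (h *: v) - f (s *: v + x))).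
  apply/funext => h /=; congr (_ *: (f _ - _)).
  by rewrite /shift /= [h *: 1]mulr1 scalerDl addrA.
split; first by rewrite /derivable quotientE; exact: diff_derivable.
by rewrite /derive quotientE -deriveE.
Qed.

Variables (f : 'rV[R]_m -> R) (beta : R).
Hypothesis f_diff : forall x, differentiable f x.
Hypothesis grad_lipschitz :
  forall x y, norm2 (grad f x - grad f y) <= beta * norm2 (x - y).
Hypothesis beta_gt0 : 0 < beta.

(* [psi s := f (s v + x) - s <v, grad f x> + beta/2 |v|^2 s^2] is nondecreasing
   on [0, 1]: by [dotp_lbound] and the Lipschitz bound, its derivative
   [<v, grad f (s v + x) - grad f x> + beta s |v|^2] is nonnegative. *)
Lemma smooth_lower_bound x v :
  f x + dotp v (grad f x) - beta / 2 * dotp v v <= f (v + x).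
Proof.
set g := grad f x; set V := dotp v v; set D := dotp v g; set c := beta * V / 2.
pose psi : R -> R := (fun s => f (s *: v + x)) - D \*: id + c \*: (id ^+ 2).
have psi_derive (s : R) : is_derive s 1 psi
    ('d f (s *: v + x) v - D *: 1 + c *: ((2%:R * s ^+ 1) *: 1)).
  by apply: is_deriveD; apply: is_deriveB; exact: is_derive_line.
have psi_mono : psi 0 <= psi 1.
  apply: (ger0_derive1_ndecr (a := 0) (b := 1)) => //; last first.
    by apply: derivable_within_continuous => s _; case: (psi_derive s).
  move=> s; rewrite in_itv /= => /andP[s_gt0 _].
  rewrite derive1E derive_val differential_dotp // [D%:A]mulr1.
  rewrite [(_ * s ^+ 1)%:A]mulr1 expr1.
  set w := grad f (s *: v + x) - g.
  have w_small : dotp w w <= (beta * s) ^+ 2 * V.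
    have := grad_lipschitz (s *: v + x) x.
    rewrite -/w addrK -[dotp w w]norm2_sqr => lip.
    have sv_sqr : norm2 (s *: v) ^+ 2 = s ^+ 2 * V.
      by rewrite norm2_sqr dotpZl dotpZr mulrA expr2.
    have w_ge0 : 0 <= norm2 w := sqrtr_ge0 _.
    have sv_ge0 : 0 <= norm2 (s *: v) := sqrtr_ge0 _.
    nra.
  have := dotp_lbound (mulr_gt0 beta_gt0 s_gt0) w_small.
  have -> : dotp v (grad f (s *: v + x)) = dotp v w + D by rewrite dotpBr subrK.
  change (c *: (2 * s)) with (c * (2 * s)); rewrite /c -/V; nra.
have : f (0 *: v + x) - D * 0 + c * 0 ^+ 2 <= f (1 *: v + x) - D * 1 + c * 1 ^+ 2.
  exact: psi_mono.
by rewrite scale0r add0r scale1r expr0n expr1n /= /c; lra.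
Qed.

Lemma gd_step_lower_bound eta x : 0 < eta -> eta * beta <= 1 ->
  f x <= f (x - eta *: grad f x) + 3 / 2 * eta * norm2 (grad f x) ^+ 2.
Proof.
move=> eta_gt0 eta_beta_le1.
have := smooth_lower_bound x (- (eta *: grad f x)).
rewrite !(dotpNl, dotpNr, dotpZl, dotpZr) -norm2_sqr [- _ + x]addrC.
have : 0 <= eta * (1 - eta * beta) * norm2 (grad f x) ^+ 2.
  by rewrite mulr_ge0 ?sqr_ge0 // mulr_ge0 ?subr_ge0 // ltW.
nra.
Qed.

End Smoothness.

Lemma Expect_le_addZ (R : realType) d (Omega : measurableType d)
    (P : probability Omega R) (X Y Z : Omega -> R) (k : R) :
  P.-integrable setT (fun w => (X w)%:E) -> P.-integrable setT (fun w => (Y w)%:E) ->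
  P.-integrable setT (fun w => (Z w)%:E) -> (forall w, X w <= Y w + k * Z w) ->
  (Expect P X <= Expect P Y + k%:E * Expect P Z)%E.
Proof.
move=> iX iY iZ XYZ; have ikZ := integrableZl measurableT k iZ.
rewrite /Expect -(integralZl measurableT iZ) -(integralD measurableT iY ikZ).
apply: le_integral => //; first exact: integrableD.
by move=> w _; rewrite /= -EFinM -EFinD lee_fin.
Qed.

Section HittingTime.
Variables (R : realType) (a g : nat -> R) (k G eps : R).
Hypotheses (k_ge0 : 0 <= k) (step : forall t, a t <= a t.+1 + k * g t).
Hypothesis g_le : forall t, (forall s, (s <= t)%N -> eps < a s) -> g t <= G.

Lemma gap_lower_bound t :
  (forall s, (s < t)%N -> eps < a s) -> a 0%N - k * t%:R * G <= a t.
Proof.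
elim: t => [|t IH] above; first by rewrite mulr0 mul0r subr0.
have := IH (fun s st => above s (ltnW st)).
have := step t; have : k * g t <= k * G.
  by rewrite ler_wpM2l // g_le // => s st; rewrite above.
rewrite -natr1 mulrDr mulr1 mulrDl; lra.
Qed.

Lemma hitting_time_lower_bound T :
  0 <= G -> a T <= eps -> a 0%N - eps <= k * T%:R * G.
Proof.
move=> G_ge0 aT_le.
have [T0 aT0_le T0_min] := ex_minnP (ex_intro (fun t => a t <= eps) T aT_le).
have above : forall s, (s < T0)%N -> eps < a s.
  by move=> s sT0; rewrite ltNge; apply: contraTN sT0 => /T0_min; rewrite -leqNgt.
have := gap_lower_bound above.
have : k * T0%:R * G <= k * T%:R * G by rewrite ler_wpM2r // ler_wpM2l // ler_nat T0_min.
lra.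
Qed.

End HittingTime.

Theorem lemma4 (R : realType) (n m : nat) (Obs rho0 : 'M[R[i]]_(2 ^ n))
  (H : 'I_m -> 'M[R[i]]_(2 ^ n))
  (d : measure_display) (Omega : measurableType d) (P : probability Omega R)
  (theta0 : Omega -> 'rV[R]_m)
  (beta eta B b delta0 eps : R) (T : nat) :
  (1 <= n)%N ->
  density rho0 ->
  is_hermitian Obs ->
  (forall j, is_hermitian (H j)) ->
  let Cu := Cuni Obs rho0 H in
  let Cst := Cstar Obs rho0 H in
  let theta t w := gd_iter Cu eta t (theta0 w) in
  let Delta t w := Cu (theta t w) - Cst in
  let gnorm2 t w := norm2 (grad Cu (theta t w)) ^+ 2 in
  let G := m%:R * B * b ^- n in
  (* expectations are well defined *)
  (forall t, P.-integrable setT (fun w => (Delta t w)%:E)) ->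
  (forall t, P.-integrable setT (fun w => (gnorm2 t w)%:E)) ->
  (* (i) smoothness *)
  (forall th, differentiable Cu th) ->
  (forall th ph, norm2 (grad Cu th - grad Cu ph) <= beta * norm2 (th - ph)) ->
  0 < beta -> 0 < eta -> eta <= beta^-1 ->
  (* (ii) trajectory-uniform flatness *)
  0 < B -> 1 < b ->
  (forall t : nat, (forall s : nat, (s <= t)%N -> (eps%:E < Expect P (Delta s))%E) ->
     (Expect P (gnorm2 t) <= G%:E)%E) ->
  0 < delta0 ->
  (delta0%:E <= Expect P (Delta 0%N))%E ->
  eps < delta0 ->
  (Expect P (Delta T) <= eps%:E)%E ->
  2 * (delta0 - eps) / (3 * eta * G) <= T%:R.
Proof.
move=> _ _ _ _ Cu Cst theta Delta gnorm2 G iDelta ignorm2 Cu_diff Cu_lip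
  beta_gt0 eta_gt0 eta_le B_gt0 b_gt1 flat _ delta0_le _ DeltaT_le.
pose a t := fine (Expect P (Delta t)); pose g t := fine (Expect P (gnorm2 t)).
have aE t : Expect P (Delta t) = (a t)%:E.
  by rewrite fineK // (integrable_fin_num measurableT (iDelta t)).
have gE t : Expect P (gnorm2 t) = (g t)%:E.
  by rewrite fineK // (integrable_fin_num measurableT (ignorm2 t)).
have eta_beta_le1 : eta * beta <= 1 by rewrite -ler_pdivlMr // div1r.
have step_pointwise t w : Delta t w <= Delta t.+1 w + 3 / 2 * eta * gnorm2 t w.
  rewrite /Delta addrAC lerD2r /gnorm2 /theta /=.
  exact: (gd_step_lower_bound Cu_diff Cu_lip beta_gt0 _ eta_gt0 eta_beta_le1).
clearbody Delta gnorm2.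
have step t : a t <= a t.+1 + 3 / 2 * eta * g t.
  rewrite -lee_fin EFinD EFinM -aE -aE -gE.
  exact: Expect_le_addZ.
have G_ge0 : 0 <= G.
  have b_ge0 : 0 <= b by rewrite ltW // (lt_trans ltr01).
  by rewrite /G mulr_ge0 // ?invr_ge0 ?exprn_ge0 // mulr_ge0 // ltW.
have g_le t : (forall s, (s <= t)%N -> eps < a s) -> g t <= G.
  by move=> above; rewrite -lee_fin -gE flat // => s st; rewrite aE lte_fin above.
have k_ge0 : 0 <= 3 / 2 * eta by rewrite mulr_ge0 // ltW.
have aT_le : a T <= eps by rewrite -lee_fin -aE.
have := hitting_time_lower_bound k_ge0 step g_le G_ge0 aT_le.
have : delta0 <= a 0%N by rewrite -lee_fin -aE.
clearbody G; have [->|G_gt0] := eqVneq G 0; first by rewrite !(mulr0, invr0) ler0n.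
rewrite ler_pdivrMr; last by rewrite !mulr_gt0 // lt_neqAle eq_sym G_gt0.
nra.
Qed.
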